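(* Let $\omega_0\neq 0$ and let $u_x,u_y,u_z$ be arbitrary (bounded measurable) real functions of time. Consider the system $$\dot b_x=-\omega_0c_y-u_zb_y+u_yb_z,\quad \dot b_y=\omega_0c_x+u_zb_x-u_xb_z,\quad \dot b_z=u_xb_y-u_yb_x,$$ $$\dot c_x=-\omega_0b_y+u_yc_z-u_zc_y,\quad \dot c_y=\omega_0b_x-u_xc_z+u_zc_x,\quad \dot c_z=u_xc_y-u_yc_x.$$ Then along every solution the quantities $$E=\frac{\omega_0^2}{2}\sum_{k=x,y,z}(b_k^2+c_k^2),\qquad L=\omega_0\sum_{k=x,y,z}b_kc_k$$ are constant in time.
   Context: Solutions are understood as absolutely continuous real functions $b_k(t),c_k(t)$, $k=x,y,z$, satisfying the equations almost everywhere. *)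

From HB Require Import structures.
From mathcomp Require Import all_boot all_order all_algebra.
From mathcomp Require Import all_classical all_reals all_analysis.
Set Implicit Arguments. Unset Strict Implicit. Unset Printing Implicit Defensive.
Import Order.TTheory GRing.Theory Num.Theory.
Import numFieldNormedType.Exports.
Local Open Scope classical_set_scope.
Local Open Scope ring_scope.

Definition abs_cont_on (R : realType) (a b : R) (f : R -> R) : Prop :=
  forall eps : R, 0 < eps -> exists2 del : R, 0 < del &
    forall (n : nat) (x y : 'I_n -> R),
      (forall i, a <= x i /\ x i <= y i /\ y i <= b) ->
      (forall i j, i != j -> y i <= x j \/ y j <= x i) ->
      \sum_(i < n) (y i - x i) < del ->
      \sum_(i < n) `|f (y i) - f (x i)| < eps.

Definition ae_deriv_on (R : realType) (a b : R) (f g : R -> R) : Prop :=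
  {ae (@lebesgue_measure R), forall t : R, t \in `[a, b] ->
      derivable f t 1 /\ derive1 f t = g t}.

Definition bdd_meas (R : realType) (u : R -> R) : Prop :=
  measurable_fun [set: R] u /\ exists M : R, forall t, `|u t| <= M.

From HB Require Import structures.
From mathcomp Require Import all_boot all_order all_algebra.
From mathcomp Require Import all_classical all_reals all_analysis.
From mathcomp Require Import ring lra measurable_realfun.
Set Implicit Arguments. Unset Strict Implicit. Unset Printing Implicit Defensive.
Import Order.TTheory GRing.Theory Num.Theory.
Import numFieldNormedType.Exports.
Local Open Scope classical_set_scope.
Local Open Scope ring_scope.

(* Both E and L are built from the solution by sums and products, so they are
   absolutely continuous, and the chain rule makes their derivatives vanish
   wherever all six equations hold: the control terms form a skew-symmetric
   matrix and the w0-coupling cancels in pairs.  It remains to show that an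
   absolutely continuous f with f' = 0 almost everywhere is constant.  Given
   e > 0, cover the null set where f' = 0 may fail by an open set U of measure
   below the delta that absolute continuity attaches to e.  A sup argument then
   splits [a, t] into points near which f grows at rate at most e and intervals
   inside U, whose total length is below delta, so that
   |f t - f a| <= e (t - a) + e. *)

Section abs_cont_on_algebra.
Variables (R : realType) (a b : R).
Implicit Types (f g : R -> R).

Lemma abs_cont_on_cst (c : R) : abs_cont_on a b (fun=> c).
Proof.
move=> e e0; exists 1 => // n x y _ _ _.
by rewrite big1 // => i _; rewrite subrr normr0.
Qed.

Lemma abs_cont_on_dominated (F f g : R -> R) (K : R) : 0 <= K ->
  abs_cont_on a b f -> abs_cont_on a b g ->
  (forall x y, a <= x -> x <= y -> y <= b ->
     `|F y - F x| <= K * (`|f y - f x| + `|g y - g x|)) ->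
  abs_cont_on a b F.
Proof.
move=> K0 acf acg HF e e0.
have e'0 : 0 < e / (2 * (K + 1)) by apply: divr_gt0 => //; lra.
have [d1 d10 H1] := acf _ e'0.
have [d2 d20 H2] := acg _ e'0.
exists (Num.min d1 d2); first by rewrite lt_min d10 d20.
move=> n x y Hxy Hno Hs.
have s1 : \sum_(i < n) (y i - x i) < d1 by apply: (lt_le_trans Hs); rewrite ge_min lexx.
have s2 : \sum_(i < n) (y i - x i) < d2.
  by apply: (lt_le_trans Hs); rewrite ge_min lexx orbT.
have := H1 n x y Hxy Hno s1; have := H2 n x y Hxy Hno s2.
set S1 := \sum_(i < n) `|f _ - _|; set S2 := \sum_(i < n) `|g _ - _| => B A.
apply: (le_lt_trans (y := K * (S1 + S2))).
  rewrite -big_split mulr_sumr; apply: ler_sum => i _.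
  by have [? [? ?]] := Hxy i; apply: HF.
have S10 : 0 <= S1 by apply: sumr_ge0.
have S20 : 0 <= S2 by apply: sumr_ge0.
have -> : e = (K + 1) * (2 * (e / (2 * (K + 1)))) by field; lra.
apply: (le_lt_trans (y := (K + 1) * (S1 + S2))); first by apply: ler_wpM2r; lra.
by rewrite ltr_pM2l; lra.
Qed.

Lemma abs_cont_on_bounded f : abs_cont_on a b f ->
  exists2 M : R, 0 <= M & forall x, a <= x <= b -> `|f x| <= M.
Proof.
move=> ac; have [d d0 Hd] := ac 1 ltr01.
have [n ltn] : exists n : nat, b - a < n.+1%:R * d.
  exists (Num.truncn ((b - a) / d)); rewrite -ltr_pdivrMr //; exact: truncnS_gt.
exists (`|f a| + n.+1%:R); first exact: addr_ge0.
move=> x /andP[ax xb].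
have n0 : 0 < n.+1%:R :> R by rewrite ltr0n.
pose h := (x - a) / n.+1%:R; pose p (i : nat) := a + i%:R * h.
have h0 : 0 <= h by apply: divr_ge0 => //; lra.
have hd : h < d by rewrite /h ltr_pdivrMr //; lra.
have pb i : (i <= n.+1)%N -> p i <= b.
  move=> le_in; rewrite /p; suff : i%:R * h <= x - a by lra.
  rewrite /h mulrA ler_pdivrMr // mulrC ler_wpM2l //; [lra | by rewrite ler_nat].
have piece i : (i < n.+1)%N -> `|f (p i.+1) - f (p i)| <= 1.
  move=> lt_in; apply/ltW; have := Hd 1 (fun=> p i) (fun=> p i.+1).
  rewrite !big_ord1; apply.
  - move=> _; have := pb i.+1 lt_in; have : 0 <= i%:R * h by apply: mulr_ge0.
    rewrite /p -natr1 mulrDl mul1r => ? ?; split; [lra | split; lra].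
  - by move=> j k; rewrite !ord1 eqxx.
  - by rewrite /p -natr1 mulrDl mul1r; lra.
have tele : f x - f a = \sum_(0 <= i < n.+1) (f (p i.+1) - f (p i)).
  by rewrite telescope_sumr // /p mul0r addr0 /h mulrC divfK ?gt_eqF // subrKC.
have : `|f x - f a| <= n.+1%:R.
  rewrite tele (le_trans (ler_norm_sum _ _ _)) //.
  rewrite -[n.+1 in X in _ <= X]subn0 -sumr_const_nat.
  by apply: ler_sum_nat => i /andP[_]; apply: piece.
have := ler_distD (f a) (f x) 0; rewrite !subr0 distrC; lra.
Qed.

Lemma abs_cont_onD f g :
  abs_cont_on a b f -> abs_cont_on a b g -> abs_cont_on a b (fun t => f t + g t).
Proof.
move=> acf acg; apply: (abs_cont_on_dominated ler01 acf acg) => x y _ _ _.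
by rewrite mul1r (_ : _ - _ = f y - f x + (g y - g x)) ?ler_normD //; ring.
Qed.

Lemma abs_cont_onM f g :
  abs_cont_on a b f -> abs_cont_on a b g -> abs_cont_on a b (fun t => f t * g t).
Proof.
move=> acf acg.
have [Mf Mf0 Hf] := abs_cont_on_bounded acf.
have [Mg Mg0 Hg] := abs_cont_on_bounded acg.
apply: (abs_cont_on_dominated (addr_ge0 Mf0 Mg0) acf acg) => x y ax xy yb.
have -> : f y * g y - f x * g x = f y * (g y - g x) + g x * (f y - f x) by ring.
apply: (le_trans (ler_normD _ _)); rewrite !normrM.
have h1 : `|f y| * `|g y - g x| <= Mf * `|g y - g x|.
  by apply: ler_wpM2r => //; apply: Hf; rewrite yb (le_trans ax xy).
have h2 : `|g x| * `|f y - f x| <= Mg * `|f y - f x|.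
  by apply: ler_wpM2r => //; apply: Hg; rewrite ax (le_trans xy yb).
have p1 : 0 <= Mf * `|f y - f x| by apply: mulr_ge0.
have p2 : 0 <= Mg * `|g y - g x| by apply: mulr_ge0.
rewrite mulrDr !mulrDl; lra.
Qed.

End abs_cont_on_algebra.

Definition nonoverlapping {R : numDomainType} (p q : R * R) : bool :=
  (p.2 <= q.1) || (q.2 <= p.1).

Lemma abs_cont_on_seq (R : realType) (a b : R) (f : R -> R) :
  abs_cont_on a b f -> forall e : R, 0 < e -> exists2 del : R, 0 < del &
  forall l : seq (R * R), (forall p, p \in l -> a <= p.1 /\ p.1 <= p.2 /\ p.2 <= b) ->
  pairwise nonoverlapping l -> \sum_(p <- l) (p.2 - p.1) < del ->
  \sum_(p <- l) `|f p.2 - f p.1| < e.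
Proof.
move=> ac e e0; have [del del0 H] := ac e e0; exists del => // l Hl pl sl.
have := H (size l) (fun i => (nth (0, 0) l i).1) (fun i => (nth (0, 0) l i).2).
rewrite (big_nth (0, 0)) big_mkord; apply.
- by move=> i; apply: Hl; exact: mem_nth.
- move=> i j ij; move/pairwiseP: pl => /(_ (0, 0)) pl.
  have [lt|gt|eq] := ltngtP i j.
  + by have /orP[] := pl i j (ltn_ord i) (ltn_ord j) lt => ->; auto.
  + by have /orP[] := pl j i (ltn_ord j) (ltn_ord i) gt => ->; auto.
  + by move: ij; rewrite (val_inj eq) eqxx.
- by move: sl; rewrite (big_nth (0, 0)) big_mkord.
Qed.

Lemma is_derive0_increment_le (R : realType) (f : R -> R) (x : R) :
  is_derive x 1 f 0 -> forall e : R, 0 < e ->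
  exists2 h : R, 0 < h & forall y, `|y - x| < h -> `|f y - f x| <= e * `|y - x|.
Proof.
move=> [df D0] e e0.
have : (fun h : R => h^-1 *: ((f \o shift x) (h *: 1) - f x)) @ 0^' --> 'D_1 f x.
  exact: df.
rewrite D0 => /cvgr0Pnorm_lt /(_ e e0).
rewrite near_withinE => /nbhs_ballP [r /= r0 H].
exists r => // y yx.
have [->|yx0] := eqVneq y x; first by rewrite !subrr normr0 mulr0.
have hy : ball (0 : R) r (y - x) by rewrite /ball /= sub0r normrN.
have := H _ hy; rewrite subr_eq0 => /(_ yx0) /=.
rewrite -[_%:A]/((y - x) * 1) mulr1 subrK.
rewrite normrM normrV ?unitfE ?normr_eq0 ?subr_eq0 // => lt.
by rewrite -ler_pdivrMr ?normr_gt0 ?subr_eq0 // mulrC; exact: ltW.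
Qed.

Lemma real_induction (R : realType) (a t : R) (P : R -> Prop) : a <= t -> P a ->
  (forall c, a <= c <= t -> exists2 h : R, 0 < h &
     forall s r, a <= s -> P s -> c - h < s <= c -> c <= r < c + h -> P r) ->
  P t.
Proof.
move=> at_ Pa step.
pose S := [set s | a <= s <= t /\ P s].
have Sa : S a by split; [rewrite lexx at_ | exact: Pa].
have hS : has_sup S by split; [exists a | exists t => s [/andP[_ ->]]].
pose c := sup S.
have ac : a <= c := sup_upper_bound hS Sa.
have ct : c <= t by apply: ge_sup; [exists a | move=> s [/andP[_ ->]]].
have := step c; rewrite ac ct => /(_ isT) [h h0 Pc_near].
have [s Ss hs] := sup_adherent h0 hS; rewrite -/c in hs.
have sc : s <= c := sup_upper_bound hS Ss.
have [/andP[as_ _] Ps] := Ss.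
have Pc : P c by apply: (Pc_near s c); rewrite ?hs ?sc ?lexx //=; lra.
have [tc|lt_ct] := leP t c; first by have -> : t = c by apply/eqP; rewrite eq_le ct tc.
pose r := Num.min t (c + h / 2).
have cr : c < r by rewrite lt_min lt_ct /=; lra.
have Sr : S r.
  split; first by rewrite (le_trans ac (ltW cr)) ge_min lexx.
  apply: (Pc_near s r) => //; rewrite ?hs ?sc ?(ltW cr) //=.
  have : r <= c + h / 2 by rewrite ge_min lexx orbT.
  lra.
by have := sup_upper_bound hS Sr; rewrite -/c leNgt cr.
Qed.

Section controlled_increment.
Variables (R : realType) (a : R) (f : R -> R) (U : set R) (e : R).
Hypothesis mU : measurable U.
Local Notation mu := (@lebesgue_measure R).

Definition controlled_increment (s : R) := exists l : seq (R * R),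
  [/\ (forall p, p \in l -> a <= p.1 /\ p.1 <= p.2 /\ p.2 <= s),
      pairwise nonoverlapping l,
      ((\sum_(p <- l) (p.2 - p.1))%:E <= mu (U `&` `[a, s[))%E &
      `|f s - f a| <= e * (s - a) + \sum_(p <- l) `|f p.2 - f p.1|].

Lemma controlled_increment_start : controlled_increment a.
Proof.
exists [::]; split => //; first by rewrite big_nil measure_ge0.
by rewrite !subrr normr0 big_nil mulr0 addr0.
Qed.

Lemma controlled_increment_cover (s r : R) : 0 <= e -> a <= s -> s <= r ->
  `[s, r[ `<=` U -> controlled_increment s -> controlled_increment r.
Proof.
move=> e0 as_ sr sU [l [Hl Hnov Hlen Hf]].
exists ((s, r) :: l); split.
- move=> p; rewrite inE => /orP[/eqP -> //|pl].
  by have [? [? ?]] := Hl p pl; do 2!split=> //; exact: le_trans sr.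
- rewrite /= Hnov andbT; apply/allP => q ql.
  by have [_ [_ qs]] := Hl q ql; apply/orP; right.
- have mUs : measurable (U `&` `[a, s[) by exact: measurableI.
  have len_sr : ((r - s)%:E = mu `[s, r[)%E.
    rewrite lebesgue_measure_itv /= lte_fin.
    by case: ltgtP sr => // -> _; rewrite subrr.
  rewrite big_cons EFinD /= len_sr; apply: (le_trans (leeD (lexx _) Hlen)).
  rewrite -measureU //; last first.
    rewrite -subset0 => x [/=]; rewrite !in_itv /= => /andP[sx _] [_ /andP[_ xs]].
    by move: (lt_le_trans xs sx); rewrite ltxx.
  apply: le_measure; rewrite ?inE; [exact: measurableU | exact: measurableI |].
  move=> x [xsr|[xU]]; rewrite /= !in_itv /=.
  + move: (xsr); rewrite /= in_itv /= => /andP[sx ->]; split; first exact: sU.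
    by rewrite (le_trans as_ sx).
  + by move=> /andP[ax xs]; split=> //; rewrite ax (lt_le_trans xs sr).
- rewrite big_cons /=; apply: (le_trans (ler_distD (f s) (f r) (f a))).
  have : e * (s - a) <= e * (r - a) by apply: ler_wpM2l => //; lra.
  by move: Hf; lra.
Qed.

Lemma controlled_increment_slow (s r : R) : s <= r ->
  `|f r - f s| <= e * (r - s) -> controlled_increment s -> controlled_increment r.
Proof.
move=> sr hfs [l [Hl Hnov Hlen Hf]]; exists l; split=> //.
- by move=> p pl; have [? [? ?]] := Hl p pl; do 2!split=> //; exact: le_trans sr.
- apply: (le_trans Hlen); apply: le_measure; rewrite ?inE; try exact: measurableI.
  move=> x [xU]; rewrite /= !in_itv /= => /andP[-> xs]; split=> //.
  exact: lt_le_trans sr.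
- by apply: (le_trans (ler_distD (f s) (f r) (f a))); move: Hf hfs; lra.
Qed.

End controlled_increment.

Lemma negligible_open_cover (R : realType) (N : set R) (del : R) :
  (@lebesgue_measure R).-negligible N -> 0 < del ->
  exists U : set R, [/\ open U, N `<=` U & (lebesgue_measure U < del%:E)%E].
Proof.
move=> [M [mM M0 NM]] del0.
have [|U [oU MU UM]] := lebesgue_regularity_outer mM _ del0.
  exact: (eq_ind_r (fun x => (x < +oo)%E) (ltry 0) M0).
exists U; split=> //; first exact: subset_trans MU.
have mU : measurable U := open_measurable oU.
by rewrite -(setDUK MU) setUC measureU0 //; exact: measurableD.
Qed.

Section controlled_increment_step.
Variables (R : realType) (a b : R) (f : R -> R) (U : set R) (e : R).
Hypotheses (oU : open U) (e0 : 0 < e)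
  (df0 : forall x, a <= x <= b -> ~ U x -> is_derive x 1 f 0).

Lemma controlled_increment_step c : a <= c <= b -> exists2 h : R, 0 < h &
  forall s r, a <= s -> controlled_increment a f U e s ->
    c - h < s <= c -> c <= r < c + h -> controlled_increment a f U e r.
Proof.
move=> cab; have mU : measurable U := open_measurable oU.
have [Uc | nUc] := pselect (U c).
- move: oU; rewrite openE => /(_ c Uc) /nbhs_ballP [h /= h0 hU].
  exists h => // s r as_ Ps /andP[hs sc] /andP[cr rh].
  apply: (controlled_increment_cover mU (ltW e0) as_ (le_trans sc cr) _ Ps) => x.
  rewrite /= in_itv /= => /andP[sx xr]; apply: hU.
  by rewrite /ball /= ltr_distlC; apply/andP; split; lra.
- have [h h0 hb] := is_derive0_increment_le (df0 cab nUc) e0.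
  exists h => // s r as_ Ps /andP[hs sc] /andP[cr rh].
  apply: (controlled_increment_slow mU (le_trans sc cr) _ Ps).
  have /hb : `|r - c| < h by rewrite ltr_distlC; apply/andP; split; lra.
  have /hb : `|s - c| < h by rewrite ltr_distlC; apply/andP; split; lra.
  rewrite (ger0_norm (_ : 0 <= r - c)) ?subr_ge0 //.
  rewrite (ler0_norm (_ : s - c <= 0)) ?subr_le0 // => hs' hr'.
  apply: (le_trans (ler_distD (f c) (f r) (f s))); rewrite (distrC (f c)); lra.
Qed.

End controlled_increment_step.

Lemma abs_cont_ae_deriv0_increment_le (R : realType) (a b : R) (f : R -> R) :
  abs_cont_on a b f ->
  {ae lebesgue_measure, forall x, x \in `[a, b] -> is_derive x 1 f 0} ->
  forall e t, 0 < e -> a <= t <= b -> `|f t - f a| <= e * (t - a + 1).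
Proof.
move=> ac df0 e t e0 /andP[at_ tb].
have [del del0 Hdel] := abs_cont_on_seq ac e0.
have [U [oU NU muU]] := negligible_open_cover df0 del0.
have df0U x : a <= x <= b -> ~ U x -> is_derive x 1 f 0.
  move=> xab Ux; have : x \in `[a, b] -> is_derive x 1 f 0.
    by apply: contrapT => nd; exact: Ux (NU x nd).
  by apply; rewrite in_itv.
have [l [Hl Hnov Hlen Hf]] : controlled_increment a f U e t.
  apply: (real_induction at_ (controlled_increment_start _ _ _ _)) => c /andP[a_c ct].
  by apply: (controlled_increment_step oU e0 df0U); rewrite a_c (le_trans ct tb).
have : \sum_(p <- l) `|f p.2 - f p.1| < e.
  apply: Hdel => //.
  - by move=> p /Hl [? [? ?]]; do 2!split => //; exact: le_trans tb.
  - rewrite -lte_fin; apply: (le_lt_trans Hlen); apply: le_lt_trans muU.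
    apply: le_measure; rewrite ?inE; last by move=> x [].
      by apply: measurableI; [exact: open_measurable | exact: measurable_itv].
    exact: open_measurable.
by move: Hf; lra.
Qed.

Lemma abs_cont_ae_deriv0_cst (R : realType) (a b : R) (f : R -> R) :
  abs_cont_on a b f ->
  {ae lebesgue_measure, forall x, x \in `[a, b] -> is_derive x 1 f 0} ->
  {in `[a, b], forall t, f t = f a}.
Proof.
move=> ac df0 t; rewrite in_itv /= => tab.
apply/eqP; rewrite -subr_eq0 -normr_le0; apply/ler_addgt0Pr => e e0.
have ta1 : 0 < t - a + 1 by case/andP: tab => ? ?; lra.
have := abs_cont_ae_deriv0_increment_le ac df0 (divr_gt0 e0 ta1) tab.
by rewrite divfK ?gt_eqF // add0r.
Qed.

(* The library hint providing [Filter (almost_everywhere _)] does not fire for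
   the Lebesgue measure on [R]. *)
#[local] Instance lebesgue_ae_filter (R : realType) :
  Filter (almost_everywhere (@lebesgue_measure R)) :=
  ae_filter_ringOfSetsType (@lebesgue_measure R).

Lemma ae_deriv_on_is_derive (R : realType) (a b : R) (f g : R -> R) :
  ae_deriv_on a b f g ->
  {ae lebesgue_measure, forall x, x \in `[a, b] -> is_derive x 1 f (g x)}.
Proof.
apply: filterS => x fg xab; have [df <-] := fg xab.
by rewrite derive1E; exact: derivableP.
Qed.

Section conserved_quantities.
Variables (R : realType) (w0 : R) (ux uy uz bx by_ bz cx cy cz : R -> R) (x : R).
Hypotheses
  (Dbx : is_derive x 1 bx (- w0 * cy x - uz x * by_ x + uy x * bz x))
  (Dby : is_derive x 1 by_ (w0 * cx x + uz x * bx x - ux x * bz x))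
  (Dbz : is_derive x 1 bz (ux x * by_ x - uy x * bx x))
  (Dcx : is_derive x 1 cx (- w0 * by_ x + uy x * cz x - uz x * cy x))
  (Dcy : is_derive x 1 cy (w0 * bx x - ux x * cz x + uz x * cx x))
  (Dcz : is_derive x 1 cz (ux x * cy x - uy x * cx x)).

Lemma energy_derive0 : is_derive x 1 (fun t => w0 ^+ 2 / 2 *
  (bx t ^+ 2 + cx t ^+ 2 + (by_ t ^+ 2 + cy t ^+ 2) + (bz t ^+ 2 + cz t ^+ 2))) 0.
Proof.
have DE := is_deriveM (is_derive_cst (w0 ^+ 2 / 2) x 1)
  (is_deriveD (is_deriveD (is_deriveD (is_deriveM Dbx Dbx) (is_deriveM Dcx Dcx))
    (is_deriveD (is_deriveM Dby Dby) (is_deriveM Dcy Dcy)))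
    (is_deriveD (is_deriveM Dbz Dbz) (is_deriveM Dcz Dcz))).
by apply: is_derive_eq DE _; rewrite /GRing.scale /=; ring.
Qed.

Lemma coherence_derive0 :
  is_derive x 1 (fun t => w0 * (bx t * cx t + by_ t * cy t + bz t * cz t)) 0.
Proof.
have DL := is_deriveM (is_derive_cst w0 x 1)
  (is_deriveD (is_deriveD (is_deriveM Dbx Dcx) (is_deriveM Dby Dcy))
    (is_deriveM Dbz Dcz)).
by apply: is_derive_eq DL _; rewrite /GRing.scale /=; ring.
Qed.

End conserved_quantities.

Theorem proposition2 (R : realType) (w0 : R) (a b : R)
  (ux uy uz bx by_ bz cx cy cz : R -> R) :
  w0 != 0 ->
  bdd_meas ux -> bdd_meas uy -> bdd_meas uz ->
  abs_cont_on a b bx -> abs_cont_on a b by_ -> abs_cont_on a b bz ->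
  abs_cont_on a b cx -> abs_cont_on a b cy -> abs_cont_on a b cz ->
  ae_deriv_on a b bx (fun t => - w0 * cy t - uz t * by_ t + uy t * bz t) ->
  ae_deriv_on a b by_ (fun t => w0 * cx t + uz t * bx t - ux t * bz t) ->
  ae_deriv_on a b bz (fun t => ux t * by_ t - uy t * bx t) ->
  ae_deriv_on a b cx (fun t => - w0 * by_ t + uy t * cz t - uz t * cy t) ->
  ae_deriv_on a b cy (fun t => w0 * bx t - ux t * cz t + uz t * cx t) ->
  ae_deriv_on a b cz (fun t => ux t * cy t - uy t * cx t) ->
  let E := fun t => w0 ^+ 2 / 2 *
     (bx t ^+ 2 + cx t ^+ 2 + (by_ t ^+ 2 + cy t ^+ 2) + (bz t ^+ 2 + cz t ^+ 2)) in
  let L := fun t => w0 * (bx t * cx t + by_ t * cy t + bz t * cz t) in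
  forall s t, s \in `[a, b] -> t \in `[a, b] -> E s = E t /\ L s = L t.
Proof.
move=> _ _ _ _ acbx acby acbz accx accy accz.
move=> /ae_deriv_on_is_derive dbx /ae_deriv_on_is_derive dby /ae_deriv_on_is_derive dbz.
move=> /ae_deriv_on_is_derive dcx /ae_deriv_on_is_derive dcy /ae_deriv_on_is_derive dcz.
move=> E L s t sab tab.
have dEL : {ae lebesgue_measure, forall x, x \in `[a, b] ->
    is_derive x 1 E 0 /\ is_derive x 1 L 0}.
  apply: filterS (filterI dbx (filterI dby (filterI dbz
    (filterI dcx (filterI dcy dcz))))) => x.
  move=> [Dbx [Dby [Dbz [Dcx [Dcy Dcz]]]]] xab.
  move: Dbx Dby Dbz Dcx Dcy Dcz => /(_ xab) Dbx /(_ xab) Dby /(_ xab) Dbz.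
  move=> /(_ xab) Dcx /(_ xab) Dcy /(_ xab) Dcz.
  by split; [exact: energy_derive0 | exact: coherence_derive0].
have acE : abs_cont_on a b E.
  exact: (abs_cont_onM (abs_cont_on_cst _ _ _) (abs_cont_onD
    (abs_cont_onD (abs_cont_onD (abs_cont_onM acbx acbx) (abs_cont_onM accx accx))
                  (abs_cont_onD (abs_cont_onM acby acby) (abs_cont_onM accy accy)))
    (abs_cont_onD (abs_cont_onM acbz acbz) (abs_cont_onM accz accz)))).
have acL : abs_cont_on a b L.
  exact: (abs_cont_onM (abs_cont_on_cst _ _ _)
    (abs_cont_onD (abs_cont_onD (abs_cont_onM acbx accx) (abs_cont_onM acby accy))
      (abs_cont_onM acbz accz))).
have cstE := abs_cont_ae_deriv0_cst acE (filterS (fun x dx xab => proj1 (dx xab)) dEL).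
have cstL := abs_cont_ae_deriv0_cst acL (filterS (fun x dx xab => proj2 (dx xab)) dEL).
by rewrite cstE ?cstL // [E t]cstE ?[L t]cstL.
Qed.
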